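(* (Provably in $\mathsf{Z}^-_{\mathrm{FTM}\omega}$.) Let $F$ be a class-function whose domain $D=\mathrm{dom}F$ is a set, and let $R=F[D]=\{F(x):x\in D\}$. Then $F$ and $R$ are sets in each of the following two cases: (1) $R$ is transitive; (2) there is a set $Y$ such that every element of $R$ is a subset of $Y$.
   Context: $\mathsf{Z}^-_{\mathrm{FTM}\omega}$ is Zermelo set theory without Power Set and Choice (Extensionality, Pairing, Union, Infinity, Regularity, Separation) plus: (FC) every set $X$ has a superset $Y$ such that every finite $x\subseteq Y$ belongs to $Y$; (TS) every set has a transitive superset; (MC) every set binary relation $A$ that is well-founded and extensional admits a transitive set $X$ and a bijection $\eta$ from its field onto $X$ with $jAk\iff\eta(j)\in\eta(k)$; (Count) every set admits an injection into $\omega$. A class-function is a class definable by an $\in$-formula (parameters allowed) that consists of ordered pairs and is functional. *)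

(* Semantic rendering of "provably in Z^-_{FTM omega}":
   the conclusion holds in every model (M, E) of the theory, for every
   class-function definable by a first-order formula with parameters.
   By Goedel's completeness theorem this is equivalent to provability. *)

Inductive formula : Type :=
| FMem : nat -> nat -> formula
| FEq  : nat -> nat -> formula
| FBot : formula
| FImp : formula -> formula -> formula
| FAll : formula -> formula.            (* ∀ binds variable 0 *)

Definition scons {M : Type} (x : M) (env : nat -> M) : nat -> M :=
  fun n => match n with 0 => x | S k => env k end.

Section Model.
Variable M : Type.
Variable E : M -> M -> Prop.

Fixpoint sat (env : nat -> M) (p : formula) : Prop :=
  match p with
  | FMem i j => E (env i) (env j)
  | FEq i j => env i = env j
  | FBot => False
  | FImp p q => sat env p -> sat env q
  | FAll p => forall x : M, sat (scons x env) p
  end.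

Definition subset (a b : M) : Prop := forall u, E u a -> E u b.
Definition transitive (a : M) : Prop := forall y u, E y a -> E u y -> E u a.
Definition is_empty (e : M) : Prop := forall u, ~ E u e.
Definition is_single (a w : M) : Prop := forall u, E u w <-> u = a.
Definition is_upair (a b w : M) : Prop := forall u, E u w <-> (u = a \/ u = b).
Definition is_pair (a b p : M) : Prop :=
  forall w, E w p <-> (is_single a w \/ is_upair a b w).
Definition pair_in (f a b : M) : Prop := exists p, E p f /\ is_pair a b p.
Definition is_succ (x s : M) : Prop := forall u, E u s <-> (E u x \/ u = x).
Definition inductive (I : M) : Prop :=
  (forall e, is_empty e -> E e I) /\
  (forall x s, E x I -> is_succ x s -> E s I).
Definition is_omega (w : M) : Prop :=
  inductive w /\ forall I, inductive I -> subset w I.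

Definition is_fun_on (f : M) (P : M -> Prop) (b : M) : Prop :=
  (forall p, E p f -> exists x y, is_pair x y p /\ P x /\ E y b) /\
  (forall x, P x -> exists y, pair_in f x y) /\
  (forall x y1 y2, pair_in f x y1 -> pair_in f x y2 -> y1 = y2).
Definition is_inj_on (f : M) (P : M -> Prop) (b : M) : Prop :=
  is_fun_on f P b /\
  (forall x1 x2 y, pair_in f x1 y -> pair_in f x2 y -> x1 = x2).
Definition is_bij_on (f : M) (P : M -> Prop) (b : M) : Prop :=
  is_inj_on f P b /\ (forall y, E y b -> exists x, pair_in f x y).

Definition is_finite (x : M) : Prop :=
  exists w n f, is_omega w /\ E n w /\ is_bij_on f (fun u => E u x) n.

Definition is_relation (A : M) : Prop :=
  forall p, E p A -> exists j k, is_pair j k p.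
Definition in_field (A j : M) : Prop :=
  exists k, pair_in A j k \/ pair_in A k j.
Definition rel_wf (A : M) : Prop :=
  forall s, (forall u, E u s -> in_field A u) -> (exists u, E u s) ->
    exists m, E m s /\ forall u, E u s -> ~ pair_in A u m.
Definition rel_ext (A : M) : Prop :=
  forall j k, in_field A j -> in_field A k ->
    (forall u, pair_in A u j <-> pair_in A u k) -> j = k.

Definition Ax_ext : Prop := forall a b, (forall x, E x a <-> E x b) -> a = b.
Definition Ax_pair : Prop := forall a b, exists c, is_upair a b c.
Definition Ax_union : Prop :=
  forall a, exists u, forall x, E x u <-> exists y, E y a /\ E x y.
Definition Ax_inf : Prop :=
  exists I, (exists e, is_empty e /\ E e I) /\
            (forall x, E x I -> exists s, is_succ x s /\ E s I).
Definition Ax_reg : Prop :=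
  forall a, (exists x, E x a) -> exists y, E y a /\ forall u, E u y -> ~ E u a.
Definition Ax_sep : Prop :=
  forall (phi : formula) (env : nat -> M) (a : M),
    exists b, forall x, E x b <-> (E x a /\ sat (scons x env) phi).
Definition Ax_FC : Prop :=
  forall X, exists Y, subset X Y /\
    forall x, is_finite x -> subset x Y -> E x Y.
Definition Ax_TS : Prop := forall X, exists T, subset X T /\ transitive T.
Definition Ax_MC : Prop :=
  forall A, is_relation A -> rel_wf A -> rel_ext A ->
    exists X eta, transitive X /\ is_bij_on eta (in_field A) X /\
      forall j k yj yk, in_field A j -> in_field A k ->
        pair_in eta j yj -> pair_in eta k yk ->
        (pair_in A j k <-> E yj yk).
Definition Ax_count : Prop :=
  forall a w, is_omega w -> exists f, is_inj_on f (fun u => E u a) w.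

Definition Z_FTM_omega : Prop :=
  Ax_ext /\ Ax_pair /\ Ax_union /\ Ax_inf /\ Ax_reg /\ Ax_sep /\
  Ax_FC /\ Ax_TS /\ Ax_MC /\ Ax_count.

Definition class_of (phi : formula) (env : nat -> M) : M -> Prop :=
  fun z => sat (scons z env) phi.

Definition is_class_function (C : M -> Prop) : Prop :=
  (forall z, C z -> exists x y, is_pair x y z) /\
  (forall z1 z2 x y1 y2, C z1 -> C z2 -> is_pair x y1 z1 -> is_pair x y2 z2 ->
     y1 = y2).

Definition cdom (C : M -> Prop) (x : M) : Prop :=
  exists y z, C z /\ is_pair x y z.
Definition crange (C : M -> Prop) (y : M) : Prop :=
  exists x z, C z /\ is_pair x y z.

Definition is_set_class (P : M -> Prop) : Prop :=
  exists s, forall x, E x s <-> P x.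

End Model.

From Stdlib Require Import Classical.

(* Choose a transitive set T such that every element of a value of F lies in T
   or is itself a value: T = ∅ in case (1), a transitive superset of Y in
   case (2).  Instead of choice, an injection of D into ω (Count) picks for each
   value y ∉ T its preimage x of least code, and y is indexed by {x, T}, while
   elements of T index themselves; by FC these indices form a set N.  The
   relation "the value indexed by m belongs to the value indexed by n" is a
   well-founded extensional set relation on N, and its Mostowski collapse (MC)
   reproduces the indexed values, which therefore lie in a set.  Separation then
   gives the range, and FC the graph of F. *)

Section Model.
Variables (M : Type) (E : M -> M -> Prop).
Notation "x ∈ y" := (E x y) (at level 70, no associativity).

Lemma sat_ext (f : formula) (e e' : nat -> M) :
  (forall n, e n = e' n) -> (sat M E e f <-> sat M E e' f).
Proof.
  revert e e'; induction f as [i j | i j | | f IHf g IHg | f IHf];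
    intros e e' Hee'; simpl.
  - now rewrite !Hee'.
  - now rewrite !Hee'.
  - tauto.
  - now rewrite (IHf e e' Hee'), (IHg e e' Hee').
  - split; intros H x; specialize (H x);
      [rewrite <- (IHf (scons x e) (scons x e')) | rewrite (IHf (scons x e) (scons x e'))];
      auto; intros [|n]; simpl; auto.
Qed.

Definition lift_ren (r : nat -> nat) (n : nat) : nat :=
  match n with 0 => 0 | S k => S (r k) end.

Fixpoint rename (r : nat -> nat) (f : formula) : formula :=
  match f with
  | FMem i j => FMem (r i) (r j)
  | FEq i j => FEq (r i) (r j)
  | FBot => FBot
  | FImp p q => FImp (rename r p) (rename r q)
  | FAll p => FAll (rename (lift_ren r) p)
  end.

Lemma sat_rename (f : formula) (r : nat -> nat) (e : nat -> M) :
  sat M E e (rename r f) <-> sat M E (fun n => e (r n)) f.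
Proof.
  revert r e; induction f as [i j | i j | | f IHf g IHg | f IHf]; intros r e; simpl;
    try tauto.
  - now rewrite IHf, IHg.
  - split; intros H x; specialize (H x).
    + rewrite IHf in H; rewrite sat_ext; [exact H | now intros [|n]].
    + rewrite IHf; rewrite sat_ext; [exact H | now intros [|n]].
Qed.

(* The parameters of a definable class are passed as the tail of the environment. *)
Definition definable (P : (nat -> M) -> Prop) : Prop :=
  exists f, forall e, P e <-> sat M E e f.

Lemma definable_mem i j : definable (fun e => e i ∈ e j).
Proof. exists (FMem i j); simpl; tauto. Qed.

Lemma definable_eq i j : definable (fun e => e i = e j).
Proof. exists (FEq i j); simpl; tauto. Qed.

Lemma definable_imp P Q : definable P -> definable Q -> definable (fun e => P e -> Q e).
Proof. intros [f Hf] [g Hg]; exists (FImp f g); intro e; simpl; now rewrite Hf, Hg. Qed.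

Lemma definable_not P : definable P -> definable (fun e => ~ P e).
Proof. intros [f Hf]; exists (FImp f FBot); intro e; simpl; now rewrite Hf. Qed.

Lemma definable_and P Q : definable P -> definable Q -> definable (fun e => P e /\ Q e).
Proof.
  intros [f Hf] [g Hg]; exists (FImp (FImp f (FImp g FBot)) FBot); intro e; simpl.
  rewrite Hf, Hg; tauto.
Qed.

Lemma definable_or P Q : definable P -> definable Q -> definable (fun e => P e \/ Q e).
Proof.
  intros [f Hf] [g Hg]; exists (FImp (FImp f FBot) g); intro e; simpl.
  rewrite Hf, Hg; destruct (classic (sat M E e f)); tauto.
Qed.

Lemma definable_iff P Q : definable P -> definable Q -> definable (fun e => P e <-> Q e).
Proof.
  intros HP HQ.
  destruct (definable_and _ _ (definable_imp _ _ HP HQ) (definable_imp _ _ HQ HP)) as [f Hf].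
  exists f; intro e; rewrite <- Hf; tauto.
Qed.

Lemma definable_all (Q : M -> (nat -> M) -> Prop) :
  definable (fun e => Q (e 0) (fun n => e (S n))) -> definable (fun e => forall x, Q x e).
Proof.
  intros [f Hf]; exists (FAll f); intro e; simpl.
  split; intros H x; [apply (Hf (scons x e)) | apply (Hf (scons x e)) in H]; apply H.
Qed.

Lemma definable_ex (Q : M -> (nat -> M) -> Prop) :
  definable (fun e => Q (e 0) (fun n => e (S n))) -> definable (fun e => exists x, Q x e).
Proof.
  intros [f Hf]; exists (FImp (FAll (FImp f FBot)) FBot); intro e; simpl; split.
  - intros [x Hx] H; apply (H x), (Hf (scons x e)), Hx.
  - intros H; apply NNPP; intro Hno; apply H; intros x Hx.
    apply Hno; exists x; apply (Hf (scons x e)), Hx.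
Qed.

Lemma definable_comp P (h : (nat -> M) -> nat -> M) (r : nat -> nat) :
  definable P -> (forall e n, h e n = e (r n)) -> definable (fun e => P (h e)).
Proof.
  intros [f Hf] Hh; exists (rename r f); intro e.
  rewrite sat_rename, Hf; apply sat_ext; intro n; apply Hh.
Qed.

Lemma definable_subst1 P a (s : nat -> nat) :
  definable P -> definable (fun e => P (scons (e a) (fun k => e (s k)))).
Proof.
  intro HP; apply (definable_comp P _ (fun n => match n with 0 => a | S k => s k end) HP).
  now intros e [|n].
Qed.

Lemma definable_sat1 f a (s : nat -> nat) :
  definable (fun e => sat M E (scons (e a) (fun k => e (s k))) f).
Proof. apply (definable_subst1 (fun e => sat M E e f)); exists f; tauto. Qed.

Lemma definable_sat2 f a b (s : nat -> nat) :
  definable (fun e => sat M E (scons (e a) (scons (e b) (fun k => e (s k)))) f).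
Proof.
  apply (definable_comp (fun e => sat M E e f) _
           (fun n => match n with 0 => a | 1 => b | S (S k) => s k end)).
  - exists f; tauto.
  - now intros e [|[|n]].
Qed.

Create HintDb definable.
#[local] Hint Resolve definable_mem definable_eq definable_sat1 definable_sat2 : definable.

Ltac definability :=
  repeat (cbv beta; first
    [ solve [auto with definable nocore]
    | apply definable_not | apply definable_and | apply definable_or
    | apply definable_iff | apply definable_imp
    | apply definable_ex | apply definable_all ]).

Lemma definable_is_empty i : definable (fun e => is_empty M E (e i)).
Proof. unfold is_empty; definability. Qed.

Lemma definable_is_single i j : definable (fun e => is_single M E (e i) (e j)).
Proof. unfold is_single; definability. Qed.

Lemma definable_is_upair i j k : definable (fun e => is_upair M E (e i) (e j) (e k)).
Proof. unfold is_upair; definability. Qed.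

#[local] Hint Resolve definable_is_empty definable_is_single definable_is_upair : definable.

Lemma definable_is_pair i j k : definable (fun e => is_pair M E (e i) (e j) (e k)).
Proof. unfold is_pair; definability. Qed.
#[local] Hint Resolve definable_is_pair : definable.

Lemma definable_pair_in i j k : definable (fun e => pair_in M E (e i) (e j) (e k)).
Proof. unfold pair_in; definability. Qed.
#[local] Hint Resolve definable_pair_in : definable.

Lemma definable_in_field i j : definable (fun e => in_field M E (e i) (e j)).
Proof. unfold in_field; definability. Qed.

Lemma definable_is_succ i j : definable (fun e => is_succ M E (e i) (e j)).
Proof. unfold is_succ; definability. Qed.
#[local] Hint Resolve definable_in_field definable_is_succ : definable.

Section Theory.
Hypothesis HZ : Z_FTM_omega M E.

Lemma ax_ext : Ax_ext M E. Proof. now destruct HZ as (H & _). Qed.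
Lemma ax_pair : Ax_pair M E. Proof. now destruct HZ as (_ & H & _). Qed.
Lemma ax_union : Ax_union M E. Proof. now destruct HZ as (_ & _ & H & _). Qed.
Lemma ax_inf : Ax_inf M E. Proof. now destruct HZ as (_ & _ & _ & H & _). Qed.
Lemma ax_reg : Ax_reg M E. Proof. now destruct HZ as (_ & _ & _ & _ & H & _). Qed.
Lemma ax_sep : Ax_sep M E. Proof. now destruct HZ as (_ & _ & _ & _ & _ & H & _). Qed.
Lemma ax_FC : Ax_FC M E. Proof. now destruct HZ as (_ & _ & _ & _ & _ & _ & H & _). Qed.
Lemma ax_TS : Ax_TS M E. Proof. now destruct HZ as (_ & _ & _ & _ & _ & _ & _ & H & _). Qed.
Lemma ax_MC : Ax_MC M E. Proof. now destruct HZ as (_ & _ & _ & _ & _ & _ & _ & _ & H & _). Qed.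
Lemma ax_count : Ax_count M E.
Proof. now destruct HZ as (_ & _ & _ & _ & _ & _ & _ & _ & _ & H). Qed.

Lemma separation P : definable P ->
  forall e a, exists b, forall x, x ∈ b <-> x ∈ a /\ P (scons x e).
Proof.
  intros [f Hf] e a; destruct (ax_sep f e a) as [b Hb].
  exists b; intro x; now rewrite Hb, Hf.
Qed.

Lemma extensional_unique (P : M -> Prop) a b :
  (forall x, x ∈ a <-> P x) -> (forall x, x ∈ b <-> P x) -> a = b.
Proof. intros Ha Hb; apply ax_ext; intro x; now rewrite Ha, Hb. Qed.

Lemma empty_unique z z' : is_empty M E z -> is_empty M E z' -> z = z'.
Proof. intros Hz Hz'; apply (extensional_unique (fun _ => False)); firstorder. Qed.

Lemma ex_single a : exists s, is_single M E a s.
Proof. destruct (ax_pair a a) as [s Hs]; exists s; intro u; rewrite (Hs u); tauto. Qed.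

Lemma ex_empty : exists z, is_empty M E z.
Proof. destruct ax_inf as (_ & (z & Hz & _) & _); eauto. Qed.

Lemma ex_pair a b : exists p, is_pair M E a b p.
Proof.
  destruct (ex_single a) as [s Hs], (ax_pair a b) as [u Hu], (ax_pair s u) as [p Hp].
  exists p; intro w; rewrite (Hp w); split.
  - intros [-> | ->]; auto.
  - intros [Hw | Hw]; [left; exact (extensional_unique _ _ _ Hw Hs)
                     | right; exact (extensional_unique _ _ _ Hw Hu)].
Qed.

Lemma ex_succ x : exists s, is_succ M E x s.
Proof.
  destruct (ex_single x) as [s Hs], (ax_pair x s) as [p Hp], (ax_union p) as [t Ht].
  exists t; intro u; rewrite Ht; split.
  - intros (y & Hy & Huy); apply Hp in Hy as [-> | ->]; [now left | right; now apply Hs].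
  - intros [Hu | ->]; [exists x | exists s]; rewrite (Hp _); split; auto; now apply Hs.
Qed.

Lemma pair_inj a b a' b' p :
  is_pair M E a b p -> is_pair M E a' b' p -> a = a' /\ b = b'.
Proof.
  intros Hp Hp'.
  destruct (ex_single a) as [s Hs], (ax_pair a b) as [u Hu].
  assert (a = a') as <-.
  { assert (Hsp : s ∈ p) by (apply Hp; auto).
    apply Hp' in Hsp as [H | H]; symmetry; apply Hs, H; auto. }
  split; [reflexivity |].
  assert (Hup : u ∈ p) by (apply Hp; auto).
  apply Hp' in Hup as [H | H].
  - assert (b = a) as -> by (apply H, Hu; auto).
    destruct (ax_pair a b') as [u' Hu'].
    assert (Hu'p : u' ∈ p) by (apply Hp'; auto).
    assert (Hb' : b' ∈ u') by (apply Hu'; auto).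
    apply Hp in Hu'p as [H' | H']; apply H' in Hb'; intuition.
  - assert (Hb : b ∈ u) by (apply Hu; auto).
    apply H in Hb as [-> | ->]; [| reflexivity].
    assert (Hb' : b' ∈ u) by (apply H; auto).
    apply Hu in Hb'; intuition.
Qed.

Lemma upair_inj_l x x' t n : is_upair M E x t n -> is_upair M E x' t n -> x = x'.
Proof.
  intros H H'.
  assert (Hx : x ∈ n) by (apply H; auto).
  apply H' in Hx as [-> | ->]; [reflexivity |].
  assert (Hx' : x' ∈ n) by (apply H'; auto).
  apply H in Hx'; intuition.
Qed.

Lemma not_mem_self a : ~ a ∈ a.
Proof.
  intro Haa; destruct (ex_single a) as [s Hs].
  destruct (ax_reg s) as [y [Hy Hmin]]; [exists a; now apply Hs |].
  apply Hs in Hy as ->; apply (Hmin a Haa), Hs; reflexivity.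
Qed.

Lemma ex_omega : exists w, is_omega M E w.
Proof.
  destruct ax_inf as (I & (z & Hz & HzI) & HI).
  destruct (separation (fun e => forall J, inductive M E J -> e 0 ∈ J)
              ltac:(unfold inductive; definability) (fun _ => z) I) as [w Hw].
  exists w; split; [split |].
  - intros z' Hz'; apply Hw; rewrite (empty_unique z' z Hz' Hz).
    split; [assumption |]; intros J [HJ _]; now apply HJ.
  - intros x s Hx Hs; apply Hw in Hx as [HxI Hx].
    destruct (HI x HxI) as [s' [Hs' Hs'I]].
    rewrite (extensional_unique _ s s' Hs Hs').
    apply Hw; split; [assumption |]; intros J HJ; apply (proj2 HJ x s'); auto.
  - intros J HJ x Hx; apply Hw in Hx; now apply Hx.
Qed.

Section Omega.
Variable w : M.
Hypothesis Hw : is_omega M E w.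

Lemma omega_ind P e : definable P ->
  (forall z, is_empty M E z -> P (scons z e)) ->
  (forall x s, x ∈ w -> P (scons x e) -> is_succ M E x s -> P (scons s e)) ->
  forall n, n ∈ w -> P (scons n e).
Proof.
  intros HP H0 HS.
  destruct (separation P HP e w) as [b Hb].
  assert (Hind : inductive M E b).
  { destruct Hw as [[Hw0 HwS] _]; split.
    - intros z Hz; apply Hb; auto.
    - intros x s Hx Hs; apply Hb in Hx as [Hxw Hx]; apply Hb; eauto. }
  intros n Hn; apply (proj2 Hw b Hind), Hb in Hn; tauto.
Qed.

Lemma omega_empty_or_mem_empty n :
  n ∈ w -> is_empty M E n \/ exists u, u ∈ n /\ is_empty M E u.
Proof.
  apply (omega_ind (fun e => is_empty M E (e 0) \/ exists u, u ∈ e 0 /\ is_empty M E u)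
           (fun _ => w) ltac:(definability)); simpl; auto.
  intros x s Hx [H | [u [Hu Hue]]] Hs; right.
  - exists x; split; [apply Hs |]; auto.
  - exists u; split; [apply Hs |]; auto.
Qed.

Lemma omega_succ_mem_or_eq m :
  m ∈ w -> forall n s, n ∈ m -> is_succ M E n s -> s ∈ m \/ s = m.
Proof.
  apply (omega_ind (fun e => forall n s, n ∈ e 0 -> is_succ M E n s -> s ∈ e 0 \/ s = e 0)
           (fun _ => w) ltac:(definability)); simpl.
  - intros z Hz n s Hn; destruct (Hz n Hn).
  - intros x s Hx IH Hs n t Hn Ht; apply Hs in Hn as [Hn | ->].
    + left; apply Hs; destruct (IH n t Hn Ht) as [H | ->]; auto.
    + right; exact (extensional_unique _ _ _ Ht Hs).
Qed.

Lemma omega_trichotomy n m : n ∈ w -> m ∈ w -> m ∈ n \/ m = n \/ n ∈ m.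
Proof.
  intros Hn; revert m.
  apply (omega_ind (fun e => forall m, m ∈ e 1 -> m ∈ e 0 \/ m = e 0 \/ e 0 ∈ m)
           (scons w (fun _ => w)) ltac:(definability)); simpl; auto.
  - intros z Hz m Hm; destruct (omega_empty_or_mem_empty m Hm) as [H | [u [Hu Hue]]].
    + right; left; exact (empty_unique _ _ H Hz).
    + right; right; now rewrite (empty_unique z u Hz Hue).
  - intros x s Hx IH Hs m Hm; destruct (IH m Hm) as [H | [-> | H]].
    + left; apply Hs; auto.
    + left; apply Hs; auto.
    + destruct (omega_succ_mem_or_eq m Hm x s H Hs); auto.
Qed.

End Omega.

Lemma pair_in_upair_iff f p q a z b o x y :
  is_upair M E p q f -> is_pair M E a z p -> is_pair M E b o q ->
  (pair_in M E f x y <-> (x = a /\ y = z) \/ (x = b /\ y = o)).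
Proof.
  intros Hf Hp Hq; split.
  - intros [r [Hr Hxy]]; apply Hf in Hr as [-> | ->];
      [left; apply (pair_inj _ _ _ _ _ Hxy Hp) | right; apply (pair_inj _ _ _ _ _ Hxy Hq)].
  - intros [[-> ->] | [-> ->]]; [exists p | exists q]; split; auto; apply Hf; auto.
Qed.

Lemma upair_bij_on a b z o u n p q f :
  is_upair M E a b u -> is_upair M E z o n ->
  is_pair M E a z p -> is_pair M E b o q -> is_upair M E p q f ->
  (a = b <-> z = o) -> is_bij_on M E f (fun x => x ∈ u) n.
Proof.
  intros Hu Hn Hp Hq Hf Hab.
  pose proof (fun x y => pair_in_upair_iff f p q a z b o x y Hf Hp Hq) as Hgraph.
  split; [split; [split; [| split] |] |].
  - intros r Hr; apply Hf in Hr as [-> | ->];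
      [exists a, z | exists b, o]; rewrite (Hu _), (Hn _); auto.
  - intros x Hx; apply Hu in Hx as [-> | ->]; [exists z | exists o]; apply Hgraph; auto.
  - intros x y1 y2 H1 H2; apply Hgraph in H1, H2.
    destruct H1 as [[-> ->] | [-> ->]], H2 as [[Hx ->] | [Hx ->]]; try reflexivity;
      [apply Hab | symmetry; apply Hab]; congruence.
  - intros x1 x2 y H1 H2; apply Hgraph in H1, H2.
    destruct H1 as [[-> ->] | [-> ->]], H2 as [[-> Hy] | [-> Hy]]; try reflexivity;
      [apply Hab | symmetry; apply Hab]; congruence.
  - intros y Hy; apply Hn in Hy as [-> | ->]; [exists a | exists b]; apply Hgraph; auto.
Qed.

Lemma upair_finite a b u : is_upair M E a b u -> is_finite M E u.
Proof.
  intros Hu.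
  destruct ex_omega as [w Hw], ex_empty as [z Hz], (ex_succ z) as [one Hone].
  pose proof Hw as [[Hw0 HwS] _].
  assert (Hnum : exists o n, is_upair M E z o n /\ n ∈ w /\ (a = b <-> z = o)).
  { destruct (classic (a = b)) as [Hab | Hab].
    - destruct (ax_pair z z) as [n Hn]; exists z, n; split; [exact Hn | split; [| tauto]].
      apply (HwS z); [now apply Hw0 |].
      intro v; rewrite (Hn v); split; [tauto |]; intros [Hv | ->]; [destruct (Hz v Hv) | auto].
    - destruct (ax_pair z one) as [n Hn]; exists one, n; split; [exact Hn | split].
      + apply (HwS one); [apply (HwS z); auto |].
        intro v; rewrite (Hn v), (Hone v); split; [tauto |].
        intros [[Hv | ->] | ->]; [destruct (Hz v Hv) | auto | auto].
      + split; [tauto |]; intro Hzo; exfalso; apply (Hz z); rewrite Hzo at 2; apply Hone; auto. }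
  destruct Hnum as (o & n & Hn & Hnw & Hab).
  destruct (ex_pair a z) as [p Hp], (ex_pair b o) as [q Hq], (ax_pair p q) as [f Hf].
  exists w, n, f; split; [exact Hw | split; [exact Hnw |]].
  exact (upair_bij_on a b z o u n p q f Hu Hn Hp Hq Hf Hab).
Qed.

Definition upair_closed (Y : M) : Prop :=
  forall a b u, a ∈ Y -> b ∈ Y -> is_upair M E a b u -> u ∈ Y.

Lemma ex_upair_closed_superset X : exists Y, subset M E X Y /\ upair_closed Y.
Proof.
  destruct (ax_FC X) as [Y [HXY HY]]; exists Y; split; [exact HXY |].
  intros a b u Ha Hb Hu; apply HY; [exact (upair_finite a b u Hu) |].
  intros v Hv; apply Hu in Hv as [-> | ->]; assumption.
Qed.

Lemma upair_closed_pair Y a b p :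
  upair_closed Y -> a ∈ Y -> b ∈ Y -> is_pair M E a b p -> p ∈ Y.
Proof.
  intros HY Ha Hb Hp.
  destruct (ex_single a) as [s Hs], (ax_pair a b) as [u Hu].
  apply (HY s u).
  - apply (HY a a); auto; intro r; rewrite (Hs r); tauto.
  - apply (HY a b); auto.
  - intro r; rewrite (Hp r); split.
    + intros [H | H]; [left; exact (extensional_unique _ _ _ H Hs)
                     | right; exact (extensional_unique _ _ _ H Hu)].
    + intros [-> | ->]; auto.
Qed.

Lemma ex_minimal_in_definable_class P e v0 : definable P -> P (scons v0 e) ->
  exists v, P (scons v e) /\ forall u, u ∈ v -> ~ P (scons u e).
Proof.
  intros HP Hv0.
  destruct (ex_single v0) as [s Hs], (ax_TS s) as [T [HsT HT]].
  destruct (separation P HP e T) as [Z HZ'].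
  destruct (ax_reg Z) as [v [Hv Hmin]].
  { exists v0; apply HZ'; split; [apply HsT, Hs |]; auto. }
  apply HZ' in Hv as [HvT Hv]; exists v; split; [exact Hv |].
  intros u Hu HPu; apply (Hmin u Hu), HZ'; split; [exact (HT v u HvT Hu) | exact HPu].
Qed.

Lemma rel_wf_ind A S P e : definable P -> rel_wf M E A ->
  (forall j, in_field M E A j -> j ∈ S) ->
  (forall n, in_field M E A n -> (forall m, pair_in M E A m n -> P (scons m e)) ->
     P (scons n e)) ->
  forall n, in_field M E A n -> P (scons n e).
Proof.
  intros HP Hwf HS Hstep.
  assert (HP_shifted : definable (fun e' => P (scons (e' 0) (fun k => e' (2 + k)))))
    by exact (definable_subst1 P 0 _ HP).
  destruct (separation (fun e' => in_field M E (e' 1) (e' 0) /\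
                          ~ P (scons (e' 0) (fun k => e' (2 + k))))
              ltac:(definability) (scons A e) S) as [B HB].
  intros n Hn; apply NNPP; intro HPn.
  destruct (Hwf B) as [m [HmB Hmin]].
  - intros u Hu; apply HB in Hu; tauto.
  - exists n; apply HB; auto.
  - apply HB in HmB as (_ & Hm & HPm); apply HPm, Hstep; [exact Hm |].
    intros u Hu; apply NNPP; intro HPu; apply (Hmin u); [| exact Hu].
    assert (Hu_field : in_field M E A u) by (exists m; now left).
    apply HB; auto.
Qed.

Lemma bounded_class_is_set P e X : definable P ->
  (forall x, P (scons x e) -> x ∈ X) -> is_set_class M E (fun x => P (scons x e)).
Proof.
  intros HP HX; destruct (separation P HP e X) as [b Hb].
  exists b; intro x; rewrite Hb; intuition.
Qed.

Lemma fun_on_pair_in f (P : M -> Prop) b x y :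
  is_fun_on M E f P b -> pair_in M E f x y -> P x /\ y ∈ b.
Proof.
  intros [Hf _] [p [Hp Hxy]].
  destruct (Hf p Hp) as (x' & y' & Hxy' & Hx' & Hy').
  now destruct (pair_inj _ _ _ _ _ Hxy Hxy') as [-> ->].
Qed.

(** * Collapsing a definable injection with ∈-closed image *)

Section Collapse.
Variables (psi : formula) (e0 : nat -> M) (N : M).
Let V n v := sat M E (scons n (scons v e0)) psi.
Hypothesis V_total : forall n, n ∈ N -> exists v, V n v.
Hypothesis V_functional : forall n v1 v2, n ∈ N -> V n v1 -> V n v2 -> v1 = v2.
Hypothesis V_injective : forall n1 n2 v, n1 ∈ N -> n2 ∈ N -> V n1 v -> V n2 v -> n1 = n2.
Hypothesis V_down : forall n v u, n ∈ N -> V n v -> u ∈ v -> exists m, m ∈ N /\ V m u.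

Let image_mem m n := m ∈ N /\ n ∈ N /\ exists vm vn, V m vm /\ V n vn /\ vm ∈ vn.

Lemma ex_image_mem_relation :
  exists A, is_relation M E A /\ forall m n, pair_in M E A m n <-> image_mem m n.
Proof.
  destruct (ex_upair_closed_superset N) as [Y [HNY HY]].
  destruct (separation
              (fun e => exists m n vm vn, m ∈ e 1 /\ n ∈ e 1 /\ is_pair M E m n (e 0) /\
                 sat M E (scons m (scons vm (fun k => e (2 + k)))) psi /\
                 sat M E (scons n (scons vn (fun k => e (2 + k)))) psi /\ vm ∈ vn)
              ltac:(definability) (scons N e0) Y) as [A HA].
  exists A; split.
  - intros p Hp; apply HA in Hp as (_ & m & n & _ & _ & _ & _ & Hmn & _); eauto.
  - intros m n; split.
    + intros [p [Hp Hmn]].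
      apply HA in Hp as (_ & m' & n' & vm & vn & Hm & Hn & Hmn' & Hvm & Hvn & Hvmn).
      destruct (pair_inj _ _ _ _ _ Hmn Hmn') as [-> ->].
      repeat split; eauto.
    + intros (Hm & Hn & vm & vn & Hvm & Hvn & Hvmn).
      destruct (ex_pair m n) as [p Hp]; exists p; split; [| exact Hp].
      apply HA; split; [exact (upair_closed_pair Y m n p HY (HNY m Hm) (HNY n Hn) Hp) |].
      exists m, n, vm, vn; auto 7.
Qed.

Section MemRelation.
Variable A : M.
Hypothesis HA : forall m n, pair_in M E A m n <-> image_mem m n.

Lemma image_mem_field j : in_field M E A j -> j ∈ N.
Proof. intros [k [H | H]]; apply HA in H as (Hj & Hk & _); assumption. Qed.

Lemma image_mem_wf : rel_wf M E A.
Proof.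
  intros s Hs [u0 Hu0].
  destruct (V_total u0 (image_mem_field u0 (Hs u0 Hu0))) as [v0 Hv0].
  destruct (ex_minimal_in_definable_class
              (fun e => exists m, m ∈ e 1 /\
                          sat M E (scons m (scons (e 0) (fun k => e (2 + k)))) psi)
              (scons s e0) v0 ltac:(definability)) as (v & (m & Hm & Hmv) & Hmin).
  { exists u0; auto. }
  exists m; split; [exact Hm |]; intros u Hu HA_um.
  apply HA in HA_um as (HuN & HmN & vu & vm & Hvu & Hvm & Hvuvm).
  rewrite (V_functional m vm v HmN Hvm Hmv) in Hvuvm.
  apply (Hmin vu Hvuvm); exists u; auto.
Qed.

Lemma image_mem_ext : rel_ext M E A.
Proof.
  intros j k Hj Hk Hjk.
  pose proof (image_mem_field j Hj) as HjN; pose proof (image_mem_field k Hk) as HkN.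
  destruct (V_total j HjN) as [vj Hvj], (V_total k HkN) as [vk Hvk].
  assert (Hsub : forall a b va vb, a ∈ N -> b ∈ N -> V a va -> V b vb ->
            (forall u, pair_in M E A u a -> pair_in M E A u b) -> forall u, u ∈ va -> u ∈ vb).
  { intros a b va vb HaN HbN Hva Hvb Hab u Hu.
    destruct (V_down a va u HaN Hva Hu) as [m [HmN Hmu]].
    assert (Hmb : pair_in M E A m b) by (apply Hab, HA; repeat split; eauto).
    apply HA in Hmb as (_ & _ & vm & vb' & Hvm & Hvb' & Hvmvb).
    now rewrite (V_functional m vm u HmN Hvm Hmu), (V_functional b vb' vb HbN Hvb' Hvb) in Hvmvb. }
  assert (vj = vk) as <-.
  { apply ax_ext; intro u; split; [apply (Hsub j k) | apply (Hsub k j)]; auto; intro m; apply Hjk. }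
  exact (V_injective j k vj HjN HkN Hvj Hvk).
Qed.

Section CollapseMap.
Variables X eta : M.
Hypothesis HX : transitive M E X.
Hypothesis Heta : is_bij_on M E eta (in_field M E A) X.
Hypothesis Heta_iso : forall j k yj yk, in_field M E A j -> in_field M E A k ->
  pair_in M E eta j yj -> pair_in M E eta k yk -> (pair_in M E A j k <-> yj ∈ yk).

Lemma collapse_agrees : forall n, in_field M E A n -> forall y, pair_in M E eta n y -> V n y.
Proof.
  destruct Heta as [[Heta_fun _] Heta_onto]; pose proof Heta_fun as [_ [Heta_tot _]].
  apply (rel_wf_ind A N
    (fun e => forall y, pair_in M E (e 1) (e 0) y ->
                        sat M E (scons (e 0) (scons y (fun k => e (2 + k)))) psi)
    (scons eta e0) ltac:(definability) image_mem_wf image_mem_field).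
  intros n Hn IH; cbn beta; fold V; intros y Hy.
  pose proof (image_mem_field n Hn) as HnN.
  destruct (V_total n HnN) as [vn Hvn].
  enough (vn = y) as <- by exact Hvn.
  apply ax_ext; intro u; split; intro Hu.
  - destruct (V_down n vn u HnN Hvn Hu) as [m [HmN Hmu]].
    assert (Hmn : pair_in M E A m n) by (apply HA; repeat split; eauto).
    assert (Hm : in_field M E A m) by (exists n; now left).
    destruct (Heta_tot m Hm) as [ym Hym].
    rewrite (V_functional m u ym HmN Hmu (IH m Hmn ym Hym)).
    exact (proj1 (Heta_iso m n ym y Hm Hn Hym Hy) Hmn).
  - pose proof (HX y u (proj2 (fun_on_pair_in eta _ X n y Heta_fun Hy)) Hu) as HuX.
    destruct (Heta_onto u HuX) as [j Hj].
    pose proof (proj1 (fun_on_pair_in eta _ X j u Heta_fun Hj)) as Hjf.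
    pose proof (proj2 (Heta_iso j n u y Hjf Hn Hj Hy) Hu) as Hjn.
    pose proof (IH j Hjn u Hj) as Hvj.
    apply HA in Hjn as (HjN & _ & vj & vn' & Hvj' & Hvn' & Hvjvn).
    now rewrite (V_functional j vj u HjN Hvj' Hvj), (V_functional n vn' vn HnN Hvn' Hvn) in Hvjvn.
Qed.

End CollapseMap.
End MemRelation.

(* Nodes outside the field of [A] have empty value, hence the extra element ∅. *)
Lemma image_bounded : exists X, forall n v, n ∈ N -> V n v -> v ∈ X.
Proof.
  destruct ex_image_mem_relation as [A [Hrel HA]].
  destruct (ax_MC A Hrel (image_mem_wf A HA) (image_mem_ext A HA))
    as (X & eta & HX & Heta & Heta_iso).
  destruct ex_empty as [z Hz], (ax_pair X z) as [p Hp], (ax_TS p) as [W [HpW HW]].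
  exists W; intros n v HnN Hnv.
  destruct (classic (exists u, u ∈ v)) as [[u Hu] | Hv_empty].
  - destruct (V_down n v u HnN Hnv Hu) as [m [HmN Hmu]].
    assert (Hn : in_field M E A n) by (exists m; right; apply HA; repeat split; eauto).
    pose proof Heta as [[Heta_fun _] _]; pose proof Heta_fun as [_ [Heta_tot _]].
    destruct (Heta_tot n Hn) as [y Hy].
    rewrite (V_functional n v y HnN Hnv (collapse_agrees A HA X eta HX Heta Heta_iso n Hn y Hy)).
    apply (HW X); [apply HpW, Hp; now left |].
    exact (proj2 (fun_on_pair_in eta _ X n y Heta_fun Hy)).
  - rewrite (empty_unique v z); [apply HpW, Hp; now right | | exact Hz].
    intros u Hu; apply Hv_empty; eauto.
Qed.

End Collapse.

Lemma ex_transitive_cover (R : M -> Prop) :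
  ((forall y u, R y -> u ∈ y -> R u) \/ exists Y, forall y, R y -> subset M E y Y) ->
  exists T, transitive M E T /\ forall y u, R y -> u ∈ y -> u ∈ T \/ R u.
Proof.
  intros [HR | [Y HY]].
  - destruct ex_empty as [z Hz]; exists z; split.
    + intros y u Hy; destruct (Hz y Hy).
    + intros y u Hy Hu; right; exact (HR y u Hy Hu).
  - destruct (ax_TS Y) as [T [HYT HT]]; exists T; split; [exact HT |].
    intros y u Hy Hu; left; exact (HYT u (HY y Hy u Hu)).
Qed.

Lemma transitive_not_mem_upair T x n : transitive M E T -> is_upair M E x T n -> ~ n ∈ T.
Proof. intros HT Hn HnT; apply (not_mem_self T), (HT n T HnT), Hn; now right. Qed.

Definition maps_to (C : M -> Prop) (x y : M) : Prop := exists z, C z /\ is_pair M E x y z.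

Lemma maps_to_functional C x y1 y2 :
  is_class_function M E C -> maps_to C x y1 -> maps_to C x y2 -> y1 = y2.
Proof. intros [_ HC] [z1 [H1 H1']] [z2 [H2 H2']]; exact (HC z1 z2 x y1 y2 H1 H2 H1' H2'). Qed.

Lemma definable_maps_to phi i j (s : nat -> nat) :
  definable (fun e => maps_to (class_of M E phi (fun k => e (s k))) (e i) (e j)).
Proof. unfold maps_to, class_of; definability. Qed.
#[local] Hint Resolve definable_maps_to : definable.

Definition code_minimal (C : M -> Prop) (g x : M) : Prop :=
  forall x' y k k', maps_to C x y -> maps_to C x' y ->
    pair_in M E g x k -> pair_in M E g x' k' -> ~ k' ∈ k.

Lemma definable_code_minimal phi i j (s : nat -> nat) :
  definable (fun e => code_minimal (class_of M E phi (fun k => e (s k))) (e i) (e j)).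
Proof. unfold code_minimal; definability. Qed.
#[local] Hint Resolve definable_code_minimal : definable.

(* Nodes index [T ∪ range C] injectively without choice: an element of [T] is
   its own node, and a value [v ∉ T] is indexed by [{x, T}] for its preimage [x]
   of least code; such a pair is never in [T] since [T ∉ T]. *)
Definition node (C : M -> Prop) (g T n v : M) : Prop :=
  (n ∈ T /\ v = n) \/
  exists x, code_minimal C g x /\ maps_to C x v /\ ~ v ∈ T /\ is_upair M E x T n.

Lemma definable_node phi i j a b (s : nat -> nat) :
  definable (fun e => node (class_of M E phi (fun k => e (s k))) (e i) (e j) (e a) (e b)).
Proof. unfold node; definability. Qed.
#[local] Hint Resolve definable_node : definable.

Section ClassFunction.
Variables (phi : formula) (env : nat -> M).
Let F := class_of M E phi env.
Hypothesis HF : is_class_function M E F.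

Lemma range_is_set :
  (exists X, forall y, crange M E F y -> y ∈ X) -> is_set_class M E (crange M E F).
Proof.
  intros [X HX].
  exact (bounded_class_is_set
           (fun e => exists x, maps_to (class_of M E phi (fun k => e (1 + k))) x (e 0))
           env X ltac:(definability) HX).
Qed.

Lemma graph_is_set :
  is_set_class M E (cdom M E F) -> is_set_class M E (crange M E F) -> is_set_class M E F.
Proof.
  intros [D HD] [R HR].
  destruct (ax_pair D R) as [p Hp], (ax_TS p) as [W [HpW HW]].
  destruct (ex_upair_closed_superset W) as [Y [HWY HY]].
  apply (bounded_class_is_set (fun e => sat M E e phi) env Y); [exists phi; tauto |].
  intros z Hz; destruct (proj1 HF z Hz) as (x & y & Hxy).
  apply (upair_closed_pair Y x y z HY); [| | exact Hxy]; apply HWY.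
  - apply (HW D); [apply HpW, Hp; now left |]; apply HD; now exists y, z.
  - apply (HW R); [apply HpW, Hp; now right |]; apply HR; now exists x, z.
Qed.

Section Representatives.
Variables D w g : M.
Hypothesis HD : forall x, x ∈ D <-> cdom M E F x.
Hypothesis Hw : is_omega M E w.
Hypothesis Hg : is_inj_on M E g (fun u => u ∈ D) w.

Lemma ex_code_minimal_preimage x y :
  maps_to F x y -> exists x', code_minimal F g x' /\ maps_to F x' y.
Proof.
  intros Hxy; destruct Hg as [Hg_fun _]; pose proof Hg_fun as [_ [Hg_tot Hg_un]].
  destruct (separation
              (fun e => exists x', maps_to (class_of M E phi (fun k => e (3 + k))) x' (e 1) /\
                                   pair_in M E (e 2) x' (e 0))
              ltac:(definability) (scons y (scons g env)) w) as [S HS].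
  destruct (Hg_tot x ltac:(apply HD; now exists y)) as [k Hk].
  destruct (ax_reg S) as [k0 [Hk0 Hmin]].
  { exists k; apply HS; split; [| now exists x].
    exact (proj2 (fun_on_pair_in g _ w x k Hg_fun Hk)). }
  apply HS in Hk0 as [_ (x0 & Hx0y & Hx0k0)].
  exists x0; split; [| exact Hx0y].
  intros x' y' k1 k' Hx0y' Hx'y' Hx0k1 Hx'k'.
  rewrite (maps_to_functional F x0 y' y HF Hx0y' Hx0y) in Hx'y'.
  rewrite (Hg_un x0 k1 k0 Hx0k1 Hx0k0).
  intro Hk'k0; apply (Hmin k' Hk'k0), HS; split.
  - exact (proj2 (fun_on_pair_in g _ w x' k' Hg_fun Hx'k')).
  - now exists x'.
Qed.

Lemma code_minimal_unique x1 x2 y :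
  code_minimal F g x1 -> code_minimal F g x2 -> maps_to F x1 y -> maps_to F x2 y -> x1 = x2.
Proof.
  intros H1 H2 Hx1 Hx2; destruct Hg as [Hg_fun Hg_inj]; pose proof Hg_fun as [_ [Hg_tot _]].
  destruct (Hg_tot x1 ltac:(apply HD; now exists y)) as [k1 Hk1].
  destruct (Hg_tot x2 ltac:(apply HD; now exists y)) as [k2 Hk2].
  destruct (omega_trichotomy w Hw k1 k2) as [H | [-> | H]].
  - exact (proj2 (fun_on_pair_in g _ w x1 k1 Hg_fun Hk1)).
  - exact (proj2 (fun_on_pair_in g _ w x2 k2 Hg_fun Hk2)).
  - destruct (H1 x2 y k1 k2 Hx1 Hx2 Hk1 Hk2 H).
  - exact (Hg_inj x1 x2 k1 Hk1 Hk2).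
  - destruct (H2 x1 y k2 k1 Hx2 Hx1 Hk2 Hk1 H).
Qed.

Section Nodes.
Variable T : M.
Hypothesis HT : transitive M E T.
Hypothesis HT_cover : forall y u, crange M E F y -> u ∈ y -> u ∈ T \/ crange M E F u.

Lemma node_functional n v1 v2 : node F g T n v1 -> node F g T n v2 -> v1 = v2.
Proof.
  intros [[Hn ->] | (x1 & _ & Hx1 & _ & Hn1)] [[Hn' ->] | (x2 & _ & Hx2 & _ & Hn2)].
  - reflexivity.
  - destruct (transitive_not_mem_upair T x2 n HT Hn2 Hn).
  - destruct (transitive_not_mem_upair T x1 n HT Hn1 Hn').
  - rewrite (upair_inj_l x1 x2 T n Hn1 Hn2) in Hx1.
    exact (maps_to_functional F x2 v1 v2 HF Hx1 Hx2).
Qed.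

Lemma node_injective n1 n2 v : node F g T n1 v -> node F g T n2 v -> n1 = n2.
Proof.
  intros [[Hn1 ->] | (x1 & Hmin1 & Hx1 & Hv1 & Hn1)] [[Hn2 Hv2] | (x2 & Hmin2 & Hx2 & Hv2 & Hn2)].
  - exact Hv2.
  - destruct (Hv2 Hn1).
  - subst v; destruct (Hv1 Hn2).
  - rewrite (code_minimal_unique x1 x2 v Hmin1 Hmin2 Hx1 Hx2) in Hn1.
    exact (extensional_unique _ _ _ Hn1 Hn2).
Qed.

Lemma node_value_mem n v u : node F g T n v -> u ∈ v -> u ∈ T \/ crange M E F u.
Proof.
  intros [[Hn ->] | (x & _ & Hxv & _ & _)] Hu.
  - left; exact (HT n u Hn Hu).
  - exact (HT_cover v u ltac:(now exists x) Hu).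
Qed.

Lemma ex_node u : u ∈ T \/ crange M E F u -> exists n, node F g T n u.
Proof.
  destruct (classic (u ∈ T)) as [HuT | HuT]; [exists u; now left |].
  intros [? | [x Hxu]]; [contradiction |].
  destruct (ex_code_minimal_preimage x u Hxu) as [x' [Hmin Hx'u]].
  destruct (ax_pair x' T) as [n Hn]; exists n; right; now exists x'.
Qed.

Lemma nodes_form_set : exists N, forall n, n ∈ N <-> exists v, node F g T n v.
Proof.
  destruct (ax_pair T D) as [p Hp], (ax_TS p) as [W [HpW HW]].
  destruct (ex_upair_closed_superset W) as [Y [HWY HY]].
  assert (HTW : T ∈ W) by (apply HpW, Hp; now left).
  assert (HDW : D ∈ W) by (apply HpW, Hp; now right).
  destruct (separation
              (fun e => exists v, node (class_of M E phi (fun k => e (3 + k))) (e 2) (e 1) (e 0) v)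
              ltac:(definability) (scons T (scons g env)) Y) as [N HN].
  exists N; intro n; rewrite HN; split; [tauto |].
  intros [v Hnv]; split; [| now exists v].
  destruct Hnv as [[Hn _] | (x & _ & [z Hz] & _ & Hn)].
  - apply HWY; exact (HW T n HTW Hn).
  - apply (HY x T n); [| apply HWY, HTW | exact Hn].
    apply HWY, (HW D x HDW), HD; now exists v, z.
Qed.

Lemma range_bounded : exists X, forall y, crange M E F y -> y ∈ X.
Proof.
  destruct nodes_form_set as [N HN].
  destruct (definable_node phi 3 2 0 1 (fun k => 4 + k)) as [psi Hpsi].
  pose (e0 := scons T (scons g env)).
  assert (Hnode : forall n v, node F g T n v <-> sat M E (scons n (scons v e0)) psi)
    by (intros n v; exact (Hpsi (scons n (scons v e0)))).
  destruct (image_bounded psi e0 N) as [X HX].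
  - intros n Hn; apply HN in Hn as [v Hv]; exists v; now apply Hnode.
  - intros n v1 v2 _ H1 H2; apply Hnode in H1, H2; exact (node_functional n v1 v2 H1 H2).
  - intros n1 n2 v _ _ H1 H2; apply Hnode in H1, H2; exact (node_injective n1 n2 v H1 H2).
  - intros n v u _ Hv Hu; apply Hnode in Hv.
    destruct (ex_node u (node_value_mem n v u Hv Hu)) as [m Hm].
    exists m; split; [apply HN; now exists u | now apply Hnode].
  - exists X; intros y Hy.
    destruct (ex_node y (or_intror Hy)) as [n Hn].
    apply (HX n y); [apply HN; now exists y | now apply Hnode].
Qed.

End Nodes.
End Representatives.
End ClassFunction.
End Theory.
End Model.

Theorem lemma9p5 :
  forall (M : Type) (E : M -> M -> Prop),
    Z_FTM_omega M E ->
    forall (phi : formula) (env : nat -> M),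
      let F := class_of M E phi env in
      is_class_function M E F ->
      is_set_class M E (cdom M E F) ->
      ( (forall y u, crange M E F y -> E u y -> crange M E F u)
        \/ (exists Y, forall y, crange M E F y -> subset M E y Y) ) ->
      is_set_class M E F /\ is_set_class M E (crange M E F).
Proof.
  intros M E HZ phi env F HF Hdom Hcases.
  destruct (ex_transitive_cover M E HZ (crange M E F) Hcases) as [T [HT HT_cover]].
  pose proof Hdom as [D HD].
  destruct (ex_omega M E HZ) as [w Hw].
  destruct (ax_count M E HZ D w Hw) as [g Hg].
  assert (Hrange : is_set_class M E (crange M E F)).
  { apply (range_is_set M E HZ phi env).
    exact (range_bounded M E HZ phi env HF D w g HD Hw Hg T HT HT_cover). }
  split; [exact (graph_is_set M E HZ phi env HF Hdom Hrange) | exact Hrange].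
Qed.
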